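(* For all $T_0 \in \mathcal{G}(X)$, $\mathcal{S}_{T_0} \subset \mathcal{G}_{T_0}\setminus\mathcal{R}_{T_0}$; that is, no strongly mixing extension of $T_0$ is a rigid extension of $T_0$.
   Context: Let $(X,m)$ and $(Y,\nu)$ both be the unit interval with Lebesgue measure, and $(Z,\mu) = (X\times Y, m\times\nu)$. $\mathcal{G}(W)$ denotes the set of invertible measure-preserving transformations of a space $W$. $\mathcal{G}_{T_0} \subset \mathcal{G}(Z)$ is the set of transformations of the form $T(x,y) = (T_0x, T_x y)$ with $T_x \in \mathcal{G}(Y)$ (extensions of $T_0$); $T_0$ is identified with $T_0\times\mathrm{id}_Y$ on $Z$. For $f$ on $Z$, $T^nf = f\circ T^n$. $\mathbb{E}(\cdot|X)$ is conditional expectation onto the $\sigma$-algebra of sets $B\times Y$. $L^2(Z|X)$ is the space of $f\in L^2(Z)$ with $\mathbb{E}(|f|^2|X)^{1/2} \in L^\infty(X)$. $T\in\mathcal{G}_{T_0}$ is a strongly mixing extension of $T_0$ if for all $f,g\in L^2(Z|X)$, $\lim_{n\to\infty}\|\mathbb{E}(T^n f\cdot\overline{g}|X) - T_0^n\mathbb{E}(f|X)\mathbb{E}(\overline{g}|X)\|_{L^2(X)} = 0$; $\mathcal{S}_{T_0}$ is the set of such extensions. $T\in\mathcal{G}_{T_0}$ is a rigid extension of $T_0$ if there is a subsequence $n_k$ such that for all $f,g\in L^2(Z|X)$, $\lim_{k\to\infty}\|\mathbb{E}(T^{n_k}f\cdot\overline{g}|X) - \mathbb{E}(T_0^{n_k}f\cdot\overline{g}|X)\|_{L^2(X)}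 = 0$; $\mathcal{R}_{T_0}$ is the set of rigid extensions. *)

From HB Require Import structures.
From mathcomp Require Import all_boot all_order all_algebra.
From mathcomp Require Import all_classical all_reals all_analysis.
From mathcomp Require Import complex.
Set Implicit Arguments. Unset Strict Implicit. Unset Printing Implicit Defensive.
Import Order.TTheory GRing.Theory Num.Theory.
Local Open Scope classical_set_scope.
Local Open Scope ring_scope.

Section Defs.
Context {R : realType}.
Local Notation C := (R[i]).

Definition unit_itv : set R := `[0%R, 1%R].

(* X = Y = [0,1] with Lebesgue measure, realised on the carrier R with
   Lebesgue measure restricted to [0,1] (points outside [0,1] are null). *)
Definition mX (A : set R) : \bar R := lebesgue_measure (A `&` unit_itv).

(* Z = X x Y with the product measure m x nu, realised on R * R. *)
Definition mZ (A : set (R * R)) : \bar R :=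
  (lebesgue_measure \x lebesgue_measure) (A `&` (unit_itv `*` unit_itv)).

Definition null_set d (W : measurableType d) (m : set W -> \bar R) (N : set W) :=
  exists M, [/\ measurable M, m M = 0%E & N `<=` M].

Definition measure_preserving d (W : measurableType d) (m : set W -> \bar R)
    (T : W -> W) :=
  measurable_fun setT T /\
  forall A, measurable A -> m (T @^-1` A) = m A.

Definition inv_mpt d (W : measurableType d) (m : set W -> \bar R) (T : W -> W) :=
  measure_preserving m T /\
  exists S : W -> W, [/\ measure_preserving m S,
     null_set m [set w | S (T w) <> w] & null_set m [set w | T (S w) <> w]].

Definition extension (T0 : R -> R) (T : R * R -> R * R) :=
  inv_mpt mZ T /\
  exists Tx : R -> R -> R,
    (forall x, unit_itv x -> inv_mpt mX (Tx x)) /\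
    (forall x y, unit_itv x -> unit_itv y -> T (x, y) = (T0 x, Tx x y)).

(* T0 identified with T0 x id_Y on Z *)
Definition liftX (T0 : R -> R) : R * R -> R * R := fun w => (T0 w.1, w.2).

Definition csq (z : C) : R := complex.Re z ^+ 2 + complex.Im z ^+ 2.

Definition cmeasurable d (W : measurableType d) (f : W -> C) :=
  measurable_fun setT (fun w => complex.Re (f w)) /\ measurable_fun setT (fun w => complex.Im (f w)).

(* E(h | X)(x) = \int_Y h(x, y) dnu(y)  (conditional expectation onto the
   sigma-algebra {B x Y}, computed fibrewise by Fubini). *)
Definition condE (h : R * R -> C) (x : R) : C :=
  ((Rintegral lebesgue_measure unit_itv (fun y => complex.Re (h (x, y))))
  +i* (Rintegral lebesgue_measure unit_itv (fun y => complex.Im (h (x, y)))))%C.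

Definition L2Z (f : R * R -> C) :=
  cmeasurable f /\
  (\int[lebesgue_measure \x lebesgue_measure]_(w in unit_itv `*` unit_itv)
      (csq (f w))%:E < +oo)%E.

(* f in L^2(Z|X): f in L^2(Z) and E(|f|^2 | X)^{1/2} in L^oo(X),
   i.e. x |-> \int_Y |f(x,y)|^2 dy is essentially bounded on X. *)
Definition L2ZX (f : R * R -> C) :=
  L2Z f /\
  exists M : R, exists N : set R, null_set mX N /\
    forall x, unit_itv x -> ~ N x ->
      (\int[lebesgue_measure]_(y in unit_itv) (csq (f (x, y)))%:E <= M%:E)%E.

Definition L2sqX (u : R -> C) : \bar R :=
  (\int[lebesgue_measure]_(x in unit_itv) (csq (u x))%:E)%E.

Definition strongly_mixing_ext (T0 : R -> R) (T : R * R -> R * R) :=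
  extension T0 T /\
  forall f g, L2ZX f -> L2ZX g ->
    (fun n : nat =>
       L2sqX (fun x => condE (fun w => f (iter n T w) * (g w)^*) x
                       - condE f (iter n T0 x) * condE (fun w => (g w)^*) x))
      @ \oo --> 0%E.

Definition rigid_ext (T0 : R -> R) (T : R * R -> R * R) :=
  extension T0 T /\
  exists nk : nat -> nat, (forall k, (nk k < nk k.+1)%N) /\
  forall f g, L2ZX f -> L2ZX g ->
    (fun k : nat =>
       L2sqX (fun x => condE (fun w => f (iter (nk k) T w) * (g w)^*) x
                       - condE (fun w => f (iter (nk k) (liftX T0) w) * (g w)^*) x))
      @ \oo --> 0%E.

End Defs.

From HB Require Import structures.
From mathcomp Require Import all_boot all_order all_algebra.
From mathcomp Require Import all_classical all_reals all_analysis.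
From mathcomp Require Import complex.
From mathcomp Require Import ring lra.
Set Implicit Arguments. Unset Strict Implicit. Unset Printing Implicit Defensive.

(* Take f = g = the indicator of X x [0, 1/2] and r_n = E(T^n f . conj g | X).
   As E(f | X) = E(conj g | X) = 1/2, strong mixing says r_n -> 1/4 in L^2(X).
   As T0 x id_Y does not move the fibre coordinate,
   E((T0 x id_Y)^n f . conj g | X) = E(f^2 | X) = 1/2, so rigidity says
   r_(n_k) -> 1/2 in L^2(X) along a subsequence.  A sequence and one of its
   subsequences cannot converge in L^2 to two different constants. *)

Import Order.TTheory GRing.Theory Num.Theory measurable_realfun.
Local Open Scope classical_set_scope.
Local Open Scope complex_scope.
Local Open Scope ring_scope.

Section measure_lemmas.
Context {R : realType}.

Lemma measurable_iter d (T : measurableType d) (f : T -> T) n :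
  measurable_fun setT f -> measurable_fun setT (iter n f).
Proof.
move=> mf; elim: n => [|n IH] /=; first exact: measurable_id.
exact: measurableT_comp mf IH.
Qed.

Lemma measurable_fun_Rintegral_section d1 d2 (T1 : measurableType d1)
    (T2 : measurableType d2) (mu : {sigma_finite_measure set T2 -> \bar R})
    (D : set T2) (F : T1 * T2 -> R) :
  measurable D -> measurable_fun setT F -> (forall w, 0 <= F w) ->
  measurable_fun setT (fun x => \int[mu]_(y in D) F (x, y)).
Proof.
move=> mD mF F0; pose G w := (F w * \1_D w.2)%:E.
have mG : measurable_fun setT G.
  apply/measurable_EFinP; apply: measurable_funM => //.
  exact: measurableT_comp (measurable_indic mD) measurable_snd.
have G0 w : (0 <= G w)%E by rewrite lee_fin mulr_ge0 // indicE.
suff -> : (fun x => \int[mu]_(y in D) F (x, y)) = fine \o fubini_F mu G.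
  exact: measurableT_comp (fine_measurable measurableT)
    (@measurable_fun_fubini_tonelli_F _ _ _ _ _ mu G mG G0).
apply/funext => x; rewrite /Rintegral /fubini_F integral_mkcond /=.
congr fine; apply: eq_integral => y _; rewrite patchE /G indicE /=.
by case: (y \in D); rewrite ?mulr1 ?mulr0.
Qed.

Lemma L2_cvg_cst_subseq_eq d (T : measurableType d)
    (mu : {measure set T -> \bar R}) (D : set T) (r : nat -> T -> R)
    (nk : nat -> nat) (a b : R) :
  measurable D -> (0 < mu D)%E -> (forall n, measurable_fun D (r n)) ->
  (forall k, (nk k < nk k.+1)%N) ->
  (\int[mu]_(x in D) ((r n x - a) ^+ 2)%:E)%E @[n --> \oo] --> 0%E ->
  (\int[mu]_(x in D) ((r (nk k) x - b) ^+ 2)%:E)%E @[k --> \oo] --> 0%E ->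
  a = b.
Proof.
move=> mD muD0 mr nk_incr ra rb.
have nk_oo : nk @ \oo --> \oo.
  have nk_ge j : (j <= nk j)%N.
    by elim: j => // j IH; exact: leq_ltn_trans IH (nk_incr j).
  move=> P [N _ PN]; exists N => // k /= Nk.
  exact/PN/(leq_trans Nk (nk_ge k)).
have := cvgeD _ (cvg_comp _ _ nk_oo ra) rb; rewrite adde0 => /(_ _ isT) sum0.
have msq c k : measurable_fun D (fun x => ((r (nk k) x - c) ^+ 2)%:E).
  by apply/measurable_EFinP; apply: measurable_funX; apply: measurable_funB.
have sum_ge k : (((a - b) ^+ 2 / 2)%:E * mu D <=
    \int[mu]_(x in D) ((r (nk k) x - a) ^+ 2)%:E +
    \int[mu]_(x in D) ((r (nk k) x - b) ^+ 2)%:E)%E.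
  rewrite -integral_cst // -ge0_integralD //;
    try by move=> x _; rewrite lee_fin sqr_ge0.
  apply: ge0_le_integral => //.
  - by move=> x _; rewrite lee_fin divr_ge0 ?sqr_ge0.
  - exact: emeasurable_funD.
  move=> x _; rewrite -EFinD lee_fin -subr_ge0.
  set t := r (nk k) x.
  have -> : (t - a) ^+ 2 + (t - b) ^+ 2 - (a - b) ^+ 2 / 2 =
            2 * (t - (a + b) / 2) ^+ 2 by rewrite /GRing.exp /=; field.
  by rewrite mulr_ge0 ?sqr_ge0.
have : (((a - b) ^+ 2 / 2)%:E * mu D <= 0)%E.
  rewrite -(cvg_lim _ sum0) //; apply: lime_ge; first exact: cvgP sum0.
  exact: nearW.
rewrite pmule_lle0 // lee_fin pmulr_lle0 ?invr_gt0 // => ab.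
by apply/eqP; rewrite -subr_eq0 -sqrf_eq0 eq_le ab sqr_ge0.
Qed.

Lemma integral_le_cst d (T : measurableType d) (mu : {measure set T -> \bar R})
    (D : set T) (f : T -> R) (c : R) :
  measurable D -> measurable_fun D f -> (forall x, D x -> 0 <= f x <= c) ->
  (\int[mu]_(x in D) (f x)%:E <= c%:E * mu D)%E.
Proof.
move=> mD mf f0c; rewrite -integral_cst //; apply: ge0_le_integral => //.
- by move=> x Dx; rewrite lee_fin; case/andP: (f0c x Dx).
- exact/measurable_EFinP.
- by move=> x Dx; rewrite lee_fin; case/andP: (f0c x Dx).
Qed.

End measure_lemmas.

Section unit_square.
Context {R : realType}.

Lemma measurable_unit_itv : measurable (unit_itv : set R).
Proof. exact: measurable_itv. Qed.

Lemma lebesgue_measure_unit_itv : lebesgue_measure (unit_itv : set R) = 1%E.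
Proof. by rewrite /unit_itv lebesgue_measure_itv /= lte01 oppr0 adde0. Qed.

Lemma product_measure_unit_square :
  ((lebesgue_measure \x lebesgue_measure) (unit_itv `*` unit_itv : set (R * R))
  = 1)%E.
Proof.
rewrite product_measure1E; try exact: measurable_unit_itv.
by rewrite -[1%E]mule1; congr (_ * _)%E; exact: lebesgue_measure_unit_itv.
Qed.

Lemma conjC_real_complex (x : R) : (x%:C)^* = x%:C.
Proof. exact: conjc_real. Qed.

Lemma csq_real (x : R) : csq x%:C = x ^+ 2.
Proof. by rewrite /csq /= expr0n addr0. Qed.

Lemma condE_real (h : R * R -> R) x :
  condE (fun w => (h w)%:C) x =
  (\int[lebesgue_measure]_(y in unit_itv) h (x, y))%:C.
Proof.
by rewrite /condE /= Rintegral_cst ?mul0r //; exact: measurable_unit_itv.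
Qed.

Lemma L2ZX_real (u : R * R -> R) (M : R) :
  measurable_fun setT u -> (forall w, `|u w| <= M) ->
  L2ZX (fun w => (u w)%:C).
Proof.
move=> mesu uM; have u2M w : 0 <= u w ^+ 2 <= M ^+ 2.
  rewrite sqr_ge0 /= -real_normK ?num_real //.
  by rewrite lerXn2r ?nnegrE ?(le_trans _ (uM w)).
split; first split.
- by split => /=; [exact: mesu | exact: measurable_cst].
- under eq_integral do rewrite csq_real.
  apply: le_lt_trans (integral_le_cst _ _ _ _) _.
  + exact: measurableX measurable_unit_itv measurable_unit_itv.
  + apply/measurable_funX.
    exact: measurable_funS measurableT (subsetT _) mesu.
  + by move=> w _; exact: u2M.
  + rewrite (_ : _ (_ `*` _) = 1%E) ?mule1 ?ltry //.
    exact: product_measure_unit_square.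
- exists (M ^+ 2), set0; split.
    by exists set0; split => //; rewrite /mX set0I measure0.
  move=> x _ _; under eq_integral do rewrite csq_real.
  rewrite -[leRHS]mule1 -lebesgue_measure_unit_itv.
  apply: integral_le_cst; first exact: measurable_unit_itv.
    apply/measurable_funX.
    apply: measurable_funS measurableT (subsetT _) _.
    exact: measurable_fun_pair2.
  by move=> y _; exact: u2M.
Qed.

End unit_square.

Section half_indicator.
Context {R : realType}.

Definition half_indic (y : R) : R := \1_`[0, 2^-1] y.

Definition half_test (w : R * R) : R[i] := (half_indic w.2)%:C.

Definition half_corr (T : R * R -> R * R) n x : R :=
  \int[lebesgue_measure]_(y in unit_itv)
    (half_indic (iter n T (x, y)).2 * half_indic y).

Lemma half_indic_ge0 y : 0 <= half_indic y.
Proof. by rewrite /half_indic indicE. Qed.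

Lemma half_indicM y : half_indic y * half_indic y = half_indic y.
Proof.
by rewrite /half_indic indicE; case: (_ \in _); rewrite ?mulr1 ?mulr0.
Qed.

Lemma measurable_half_indic : measurable_fun setT half_indic.
Proof. exact: measurable_indic. Qed.

Lemma Rintegral_half_indic :
  \int[lebesgue_measure]_(y in unit_itv) half_indic y = 2^-1.
Proof.
rewrite /Rintegral /half_indic integral_indic //; last exact: measurable_itv.
rewrite setIidl; last by apply: subset_itvl; rewrite bnd_simp; lra.
have half_gt0 : (0 : R) < 2^-1 by lra.
have := @lebesgue_measure_itv R `[0, 2^-1]; rewrite /= lte_fin half_gt0 => ->.
by rewrite -EFinD subr0.
Qed.

Lemma L2ZX_half_test : L2ZX half_test.
Proof.
apply: (@L2ZX_real _ _ 1).
  exact: measurableT_comp measurable_half_indic measurable_snd.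
move=> w; rewrite /half_indic indicE.
by case: (_ \in _); rewrite ?normr1 ?normr0.
Qed.

Lemma condE_half_test x : condE half_test x = (2^-1)%:C.
Proof.
by rewrite (condE_real (fun w => half_indic w.2)) Rintegral_half_indic.
Qed.

Lemma condE_half_test_conj x : condE (fun w => (half_test w)^*) x = (2^-1)%:C.
Proof.
rewrite -(condE_half_test x); congr condE; apply/funext => w.
by rewrite /half_test conjC_real_complex.
Qed.

Lemma condE_half_test_iter (T : R * R -> R * R) n x :
  condE (fun w => half_test (iter n T w) * (half_test w)^*) x =
  (half_corr T n x)%:C.
Proof.
rewrite -(condE_real (fun w => half_indic (iter n T w).2 * half_indic w.2)).
congr condE; apply/funext => w.
by rewrite /half_test conjC_real_complex rmorphM.
Qed.

Lemma condE_half_test_liftX (T0 : R -> R) n x :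
  condE (fun w => half_test (iter n (liftX T0) w) * (half_test w)^*) x =
  (2^-1)%:C.
Proof.
have iter_liftX w : (iter n (liftX T0) w).2 = w.2 by elim: n => //= n ->.
rewrite condE_half_test_iter -Rintegral_half_indic; congr _%:C.
by apply: eq_Rintegral => y _; rewrite iter_liftX half_indicM.
Qed.

Lemma measurable_half_corr (T : R * R -> R * R) n :
  measurable_fun setT T -> measurable_fun setT (half_corr T n).
Proof.
move=> mT; apply: (@measurable_fun_Rintegral_section R _ _ _ _ lebesgue_measure
  _ (fun w => half_indic (iter n T w).2 * half_indic w.2)).
- exact: measurable_unit_itv.
- apply: measurable_funM; apply: measurableT_comp measurable_half_indic _.
    exact: measurableT_comp measurable_snd (measurable_iter _ mT).
  exact: measurable_snd.
- by move=> w; rewrite mulr_ge0 ?half_indic_ge0.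
Qed.

Lemma L2sqX_half_mixing_defect (T : R * R -> R * R) (T0 : R -> R) n :
  L2sqX (fun x => condE (fun w => half_test (iter n T w) * (half_test w)^*) x
                  - condE half_test (iter n T0 x)
                    * condE (fun w => (half_test w)^*) x)
  = (\int[lebesgue_measure]_(x in unit_itv)
       ((half_corr T n x - 2^-1 * 2^-1) ^+ 2)%:E)%E.
Proof.
apply: eq_integral => x _.
by rewrite condE_half_test_iter condE_half_test condE_half_test_conj
  -rmorphM -rmorphB csq_real.
Qed.

Lemma L2sqX_half_rigidity_defect (T : R * R -> R * R) (T0 : R -> R) n :
  L2sqX (fun x => condE (fun w => half_test (iter n T w) * (half_test w)^*) x
                  - condE (fun w => half_test (iter n (liftX T0) w)
                                    * (half_test w)^*) x)
  = (\int[lebesgue_measure]_(x in unit_itv)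
       ((half_corr T n x - 2^-1) ^+ 2)%:E)%E.
Proof.
apply: eq_integral => x _.
by rewrite condE_half_test_iter condE_half_test_liftX -rmorphB csq_real.
Qed.

End half_indicator.

Theorem lemma4p2 (R : realType) (T0 : R -> R) :
  inv_mpt mX T0 ->
  forall T : R * R -> R * R,
    strongly_mixing_ext T0 T -> extension T0 T /\ ~ rigid_ext T0 T.
Proof.
move=> _ T [extT mixT]; split => //; case=> _ [nk [nk_incr rigT]].
have mT : measurable_fun setT T by case: extT => [[[]]].
have mix := mixT _ _ L2ZX_half_test L2ZX_half_test.
rewrite (eq_cvg _ _ (L2sqX_half_mixing_defect T T0)) in mix.
have rig := rigT _ _ L2ZX_half_test L2ZX_half_test.
rewrite (eq_cvg _ _ (fun k => L2sqX_half_rigidity_defect T T0 (nk k))) in rig.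
have : 2^-1 * 2^-1 = 2^-1 :> R.
  apply: (L2_cvg_cst_subseq_eq _ _ _ nk_incr mix rig).
  - exact: measurable_unit_itv.
  - rewrite (_ : _ unit_itv = 1%E) ?lte01 //.
    exact: lebesgue_measure_unit_itv.
  - move=> n; apply: measurable_funS measurableT (subsetT _) _.
    exact: measurable_half_corr.
lra.
Qed.
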